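(* For any field $\mathbb{F}$ and any matrix $M\in\mathbb{F}^{2\times2}$, the $8\times 8$ matrix $M^{\otimes 3}$ satisfies $\mathcal{R}_{M^{\otimes 3}}(1)\le 23$.
   Context: $\mathcal{R}_A(r)=\min\{\mathrm{nnz}(B):\mathrm{rank}(A+B)\le r\}$ is the rank-$r$ rigidity of $A$ over $\mathbb{F}$ (minimum number of entries to change to get rank $\le r$). *)

From mathcomp Require Import all_boot all_algebra.
From mathcomp Require Import mxtens.
From mathcomp Require Import boolp.
Set Implicit Arguments. Unset Strict Implicit. Unset Printing Implicit Defensive.
Import GRing.Theory.
Local Open Scope ring_scope.

Definition nnz (F : fieldType) (m n : nat) (B : 'M[F]_(m, n)) : nat :=
  #|[set ij : 'I_m * 'I_n | B ij.1 ij.2 != 0]|.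

Definition rig_pred (F : fieldType) (m n : nat) (A : 'M[F]_(m, n)) (r : nat)
  : pred nat :=
  fun k => `[< exists B : 'M[F]_(m, n), nnz B = k /\ (\rank (A + B)%R <= r)%N >].

Lemma rig_pred_ex (F : fieldType) (m n : nat) (A : 'M[F]_(m, n)) (r : nat) :
  exists k, rig_pred A r k.
Proof.
exists (nnz (- A)); apply/asboolP; exists (- A); split => //.
by rewrite addrN mxrank0.
Qed.

Definition rigidity (F : fieldType) (m n : nat) (A : 'M[F]_(m, n)) (r : nat)
  : nat := ex_minn (rig_pred_ex A r).

From mathcomp Require Import all_boot all_algebra mxtens.
From mathcomp Require Import boolp zify ring.
Set Implicit Arguments. Unset Strict Implicit. Unset Printing Implicit Defensive.
Import GRing.Theory.
Local Open Scope ring_scope.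

(* Let M = [a b; c d].  Changing the entries of A outside a set E so that A
   becomes a matrix R of rank <= r shows rigidity A r <= #|E|; so it suffices
   to exhibit a rank-one matrix (an outer product f g^T) that agrees with
   M^(x)3 outside 23 entries.
   - If a, d != 0, index rows and columns of M^(x)3 by bit strings i, j of
     length 3.  The outer product with f 0 = b/d, f i = (c/a)^(|i|-1) and
     g 0 = a^2 c, g j = a^2 d (b/a)^(|j|-1) agrees with M^(x)3 at (i, j)
     whenever exactly one of i, j is 0, or i and j share exactly one 1 bit;
     the remaining 23 positions are the exceptional set.
   - If b, c != 0, swapping the columns of M brings b, c onto the diagonal;
     this reverses the column order of M^(x)3, so the previous case applies
     up to a reindexing of the columns.
   - Otherwise ad = bc = 0, so M has rank <= 1 and so has M^(x)3: no entry
     needs to change. *)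

Lemma rigidity_le_exceptional (F : fieldType) m n (A R : 'M[F]_(m, n)) r
    (E : {set 'I_m * 'I_n}) :
  (\rank R <= r)%N -> (forall i j, (i, j) \notin E -> A i j = R i j) ->
  (rigidity A r <= #|E|)%N.
Proof.
move=> rankR AR; rewrite /rigidity; case: ex_minnP => k _ kmin.
apply: leq_trans (kmin (nnz (R - A)) _) _.
  by apply/asboolP; exists (R - A); split => //; rewrite addrC subrK.
apply: subset_leq_card; apply/subsetP => -[i j]; rewrite inE /= !mxE.
by apply: contraR => /AR ->; rewrite subrr eqxx.
Qed.

Lemma rigidity_low_rank (F : fieldType) m n (A : 'M[F]_(m, n)) r :
  (\rank A <= r)%N -> rigidity A r = 0%N.
Proof.
move=> rankA; apply/eqP; rewrite -leqn0 -(cards0 ('I_m * 'I_n)%type).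
exact: rigidity_le_exceptional rankA _.
Qed.

Lemma rank_outer (F : fieldType) m n (f : 'I_m -> F) (g : 'I_n -> F) :
  (\rank (\matrix_(i, j) (f i * g j)%R) <= 1)%N.
Proof.
have -> : \matrix_(i, j) (f i * g j)%R = (\col_i f i) *m (\row_j g j).
  by apply/matrixP => i j; rewrite !mxE big_ord1 !mxE.
exact: leq_trans (mxrankM_maxl _ _) (rank_leq_col _).
Qed.

Definition near_outer (F : fieldType) m n (A : 'M[F]_(m, n)) (k : nat) : Prop :=
  exists (E : {set 'I_m * 'I_n}) (f : 'I_m -> F) (g : 'I_n -> F),
    (#|E| <= k)%N /\ forall i j, (i, j) \notin E -> A i j = f i * g j.

Lemma rigidity_le_near_outer (F : fieldType) m n (A : 'M[F]_(m, n)) k :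
  near_outer A k -> (rigidity A 1 <= k)%N.
Proof.
case=> E [f [g [cardE Afg]]]; apply: leq_trans cardE.
apply: rigidity_le_exceptional (rank_outer f g) _ => i j.
by move/Afg ->; rewrite mxE.
Qed.

(* Rank is submultiplicative under Kronecker products: factor A and B
   through their bases and use the mixed-product rule. *)
Lemma rank_tensmx (F : fieldType) m n p q (A : 'M[F]_(m, n)) (B : 'M[F]_(p, q)) :
  (\rank (A *t B) <= \rank A * \rank B)%N.
Proof.
rewrite -{1}(mulmx_base A) -{1}(mulmx_base B) -tensmx_mul.
exact: leq_trans (mxrankM_maxl _ _) (rank_leq_col _).
Qed.

Lemma rank_ntensmx (F : fieldType) m n (A : 'M[F]_(m, n)) k :
  (\rank (A ^t k.+1) <= \rank A ^ k.+1)%N.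
Proof.
elim: k => [|k IHk]; first by rewrite [X in (_ <= X)%N]expn1.
rewrite ntensmxSS [X in (_ <= X)%N]expnS; apply: leq_trans (rank_tensmx _ _) _.
by rewrite leq_mul2l IHk orbT.
Qed.

Lemma det_mx22 (R : comPzRingType) (M : 'M[R]_2) :
  \det M = M 0 0 * M 1 1 - M 0 1 * M 1 0.
Proof.
rewrite (expand_det_row _ 0) !big_ord_recl big_ord0 /cofactor !det_mx11 !mxE /=.
rewrite addr0 expr0 expr1 mul1r mulN1r mulrN.
by congr (M _ _ * M _ _ - M _ _ * M _ _); apply/val_inj.
Qed.

Lemma rank_le1_mx22 (F : fieldType) (M : 'M[F]_2) :
  M 0 0 * M 1 1 = M 0 1 * M 1 0 -> (\rank M <= 1)%N.
Proof.
move=> detM0; have : ~~ row_free M.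
  by rewrite row_free_unit unitmxE unitfE det_mx22 detM0 subrr eqxx.
by rewrite /row_free -ltnS ltn_neqAle rank_leq_row andbT.
Qed.

Definition revc (R : Type) m n (A : 'M[R]_(m, n)) : 'M[R]_(m, n) :=
  \matrix_(i, j) A i (rev_ord j).

Lemma revcK (R : Type) m n : involutive (@revc R m n).
Proof. by move=> A; apply/matrixP => i j; rewrite !mxE rev_ordK. Qed.

Lemma rev_mxtens_index p q (i : 'I_p) (j : 'I_q) :
  rev_ord (mxtens_index (i, j)) = mxtens_index (rev_ord i, rev_ord j).
Proof.
apply: val_inj => /=; have ltip := ltn_ord i; have ltjq := ltn_ord j.
rewrite mulnBl; nia.
Qed.

Lemma revc_tensmx (R : pzRingType) m n p q (A : 'M[R]_(m, n)) (B : 'M[R]_(p, q)) :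
  revc (A *t B) = revc A *t revc B.
Proof.
apply/matrixP => i j.
case: (mxtens_indexP i) => i1 i2; case: (mxtens_indexP j) => j1 j2.
by rewrite mxE rev_mxtens_index !tensmxE !mxE.
Qed.

Lemma revc_ntensmx (R : pzRingType) m n (A : 'M[R]_(m, n)) k :
  revc (A ^t k.+1) = revc A ^t k.+1.
Proof. by elim: k => [|k IHk] //; rewrite !ntensmxSS revc_tensmx IHk. Qed.

Lemma near_outer_revc (F : fieldType) m n (A : 'M[F]_(m, n)) k :
  near_outer A k -> near_outer (revc A) k.
Proof.
case=> E [f [g [cardE Afg]]].
pose swap (ij : 'I_m * 'I_n) := (ij.1, rev_ord ij.2).
have swapK : involutive swap by move=> -[i j]; rewrite /swap /= rev_ordK.
exists (swap @^-1: E), f, (fun j => g (rev_ord j)); split.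
  by rewrite card_preimset //; apply: inv_inj.
by move=> i j; rewrite inE mxE => /Afg.
Qed.

Lemma revc_mx2E (R : Type) (M : 'M[R]_2) :
  revc M 0 0 = M 0 1 /\ revc M 1 1 = M 1 0.
Proof. by rewrite !mxE; split; congr (M _ _); apply: val_inj. Qed.

Lemma ord2_cases (i : 'I_2) : i = 0 \/ i = 1.
Proof. by case: i => -[|[|//]] ?; [left | right]; apply: val_inj. Qed.

(* Rows and columns of M^(x)3 are indexed by triples of bits (i0 i1 i2),
   i.e. by the number 4 i0 + 2 i1 + i2 < 8. *)
Definition idx3 (i0 i1 i2 : 'I_2) : 'I_(2 ^ 3) :=
  mxtens_index (i0, mxtens_index (i1, i2)).

Lemma idx3P (i : 'I_(2 ^ 3)) : exists i0 i1 i2, i = idx3 i0 i1 i2.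
Proof.
case: (mxtens_indexP i) => i0 i'; case: (mxtens_indexP i') => i1 i2.
by exists i0, i1, i2.
Qed.

Lemma ntensmx3E (R : pzRingType) (M : 'M[R]_2) (i0 i1 i2 j0 j1 j2 : 'I_2) :
  (M ^t 3) (idx3 i0 i1 i2) (idx3 j0 j1 j2) = M i0 j0 * (M i1 j1 * M i2 j2).
Proof. by rewrite ntensmxSS ntensmx2 !tensmxE. Qed.

Definition bit (k n : nat) : bool := odd (iter k half n).
Definition weight (n : nat) : nat := bit 0 n + bit 1 n + bit 2 n.
Definition overlap (n p : nat) : nat :=
  (bit 0 n && bit 0 p) + (bit 1 n && bit 1 p) + (bit 2 n && bit 2 p).

(* The positions where the rank-one approximant below agrees with M^(x)3. *)
Definition agrees (i j : nat) : bool :=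
  if i == 0%N then j != 0%N else (j == 0%N) || (overlap i j == 1%N).

Definition exceptional : {set 'I_(2 ^ 3) * 'I_(2 ^ 3)} :=
  [set ij : 'I_(2 ^ 3) * 'I_(2 ^ 3) | ~~ agrees ij.1 ij.2].

Lemma card_pairs n (P : 'I_n -> 'I_n -> bool) :
  #|[set ij : 'I_n * 'I_n | P ij.1 ij.2]| = (\sum_(i < n) \sum_(j < n) P i j)%N.
Proof.
rewrite cardsE -sum1_card big_mkcond pair_big /=.
by apply: eq_bigr => -[i j] _.
Qed.

Lemma card_exceptional : #|exceptional| = 23%N.
Proof.
by rewrite (card_pairs (fun i j => ~~ agrees i j)) !big_ord_recr !big_ord0.
Qed.

Section DiagonalCase.

Variables (F : fieldType) (M : 'M[F]_2).
Let a := M 0 0.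
Let b := M 0 1.
Let c := M 1 0.
Let d := M 1 1.
Hypotheses (a_neq0 : a != 0) (d_neq0 : d != 0).

Definition approx_row (i : nat) : F :=
  if i == 0%N then b / d else (c / a) ^+ (weight i).-1.
Definition approx_col (j : nat) : F :=
  if j == 0%N then a ^+ 2 * c else a ^+ 2 * d * (b / a) ^+ (weight j).-1.

(* The 64 entries are checked one by one: each agreeing entry is the same
   monomial in a, b, c, d on both sides. *)
Lemma approx_agrees (i j : 'I_(2 ^ 3)) :
  agrees i j -> (M ^t 3) i j = approx_row i * approx_col j.
Proof.
have [i0 [i1 [i2 ->]]] := idx3P i; have [j0 [j1 [j2 ->]]] := idx3P j.
rewrite ntensmx3E.
case: (ord2_cases i0) => ->; case: (ord2_cases i1) => ->;
case: (ord2_cases i2) => ->; case: (ord2_cases j0) => ->;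
case: (ord2_cases j1) => ->; case: (ord2_cases j2) => ->;
rewrite /approx_row /approx_col /= => // _; rewrite -/a -/b -/c -/d; field.
all: by rewrite ?a_neq0 ?d_neq0.
Qed.

Lemma tens3_near_outer : near_outer (M ^t 3) 23.
Proof.
exists exceptional, (fun i => approx_row i), (fun j => approx_col j).
rewrite card_exceptional; split => // i j.
by rewrite inE negbK; apply: approx_agrees.
Qed.

End DiagonalCase.

Theorem mainTheorem7 (F : fieldType) (M : 'M[F]_2) :
  (rigidity (M ^t 3) 1 <= 23)%N.
Proof.
have [/andP[a_neq0 d_neq0] | ad_eq0] := boolP ((M 0 0 != 0) && (M 1 1 != 0)).
  exact/rigidity_le_near_outer/tens3_near_outer.
have [/andP[b_neq0 c_neq0] | bc_eq0] := boolP ((M 0 1 != 0) && (M 1 0 != 0)).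
  have [revc00 revc11] := revc_mx2E M.
  rewrite -[M]revcK -(revc_ntensmx (revc M) 2).
  apply/rigidity_le_near_outer/near_outer_revc/tens3_near_outer.
    by rewrite revc00.
  by rewrite revc11.
have rankM : (\rank M <= 1)%N.
  apply: rank_le1_mx22; rewrite !negb_and !negbK in ad_eq0 bc_eq0.
  by case/orP: ad_eq0 => /eqP ->; case/orP: bc_eq0 => /eqP ->; rewrite ?mul0r ?mulr0.
have rankM3 : (\rank (M ^t 3) <= 1)%N.
  apply: leq_trans (rank_ntensmx M 2) _.
  by rewrite -[X in (_ <= X)%N](exp1n 3) leq_exp2r.
by rewrite rigidity_low_rank.
Qed.
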